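(* Let $H=(V,E)$ be a capacitated hypergraph, let $v_1,\ldots,v_n$ be a tight ordering for $H$, and let $G=(V,E')$ be the corresponding tight graph. Then for all $1\le i<j\le n$, $d'(V_i,v_j;G)=d'(V_i,v_j;H)$.
   Context: A hypergraph $H=(V,E)$ has finite vertex set $V$, a finite multiset $E$ of edges (subsets of $V$), and capacities $c:E\to\mathbb{R}_{\ge0}$. For disjoint $A,B\subseteq V$, $d'(A,B;H)$ is the total capacity of edges $e$ with $e\cap A\ne\emptyset$, $e\cap B\ne\emptyset$ and $e\subseteq A\cup B$ (a vertex $v$ stands for $\{v\}$). For an ordering $v_1,\ldots,v_n$, $V_i=\{v_1,\ldots,v_i\}$ ($V_0=\emptyset$); it is a tight ordering if $d'(V_{i-1},v_i;H)\ge d'(V_{i-1},v_j;H)$ for all $1\le i<j\le n$. The tight graph $G=(V,E')$ with respect to $H$ and this ordering has, for each $e\in E$, an edge $e'$ of capacity $c(e)$ consisting of the last two vertices of $e$ in the ordering (the last $\min(2,|e|)$ vertices). *)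

From mathcomp Require Import all_boot all_order all_algebra.
Set Implicit Arguments. Unset Strict Implicit. Unset Printing Implicit Defensive.
Import Order.TTheory GRing.Theory Num.Theory.
Local Open Scope ring_scope.

Section Hyper.
Variables (R : realDomainType) (V : finType).

Definition hypergraph := seq ({set V} * R).

Definition dprime (H : hypergraph) (A B : {set V}) : R :=
  \sum_(e <- H | [&& e.1 :&: A != set0, e.1 :&: B != set0 & e.1 \subset A :|: B]) e.2.

Definition is_ordering (s : seq V) : Prop := uniq s /\ (forall v : V, v \in s).

Definition vprefix (s : seq V) (i : nat) : {set V} := [set x in take i s].

(* the vertex at 0-based position j, i.e. v_(j+1) *)
Definition vtx (s : seq V) (j : 'I_(size s)) : V := tnth (in_tuple s) j.




(* tight ordering: for 1 <= i < j <= n, d'(V_(i-1), v_i) >= d'(V_(i-1), v_j);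
   stated with 0-based positions i < j. *)
Local Arguments vtx : clear implicits.
Definition tight_ordering (H : hypergraph) (s : seq V) : Prop :=
  forall i j : 'I_(size s), (i < j)%N ->
    dprime H (vprefix s i) [set vtx s j] <= dprime H (vprefix s i) [set vtx s i].

(* last min(2,|e|) vertices of e in the ordering s *)
Definition tight_edge (s : seq V) (e : {set V}) : {set V} :=
  let t := [seq x <- s | x \in e] in [set x in drop (size t - 2)%N t].

Definition tight_graph (s : seq V) (H : hypergraph) : hypergraph :=
  [seq (tight_edge s e.1, e.2) | e <- H].

End Hyper.
Arguments vtx {V} s j.

(** An edge [e] is counted in [d'(V_i, v_j)], [j >= i], exactly when [e]
    meets the prefix [V_i] and its only vertex outside [V_i] is [v_j].  Since
    [V_i] is an initial segment of the ordering, the vertices of [e] outside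
    [V_i] come last along it; so the last two vertices of [e] are the last
    vertex of [e] in [V_i] followed by [v_j] in that case, and the tight edge
    is counted too.  Conversely, the vertices of the tight edge outside [V_i]
    are the last (at most two) such vertices of [e], which are [{v_j}] only if
    [v_j] is the only one.  So [G] and [H] count the same edges, with the same
    capacities, for every ordering. *)

From mathcomp Require Import all_boot all_order all_algebra.
From mathcomp Require Import zify.
Import Order.TTheory GRing.Theory Num.Theory.
Local Open Scope ring_scope.

Set Implicit Arguments.
Unset Strict Implicit.
Unset Printing Implicit Defensive.

Section LastTwo.
Variable T : eqType.

Lemma drop_last_two_cat (t1 t2 : seq T) :
  drop (size (t1 ++ t2) - 2) (t1 ++ t2) =
  drop (size t1 + size t2 - 2) t1 ++ drop (size t2 - 2) t2.
Proof.
rewrite drop_cat size_cat; case: ltnP => [lt_t1|ge_t1].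
- by rewrite (_ : size t2 - 2 = 0)%N ?drop0 //; lia.
- by rewrite [drop _ t1]drop_oversize //=; congr (drop _ _); lia.
Qed.

Lemma drop_last_two_cat_single (t1 t2 : seq T) (v : T) :
  (drop (size t1 + size t2 - 2) t1 != [::]) && (drop (size t2 - 2) t2 == [:: v])
  = (t1 != [::]) && (t2 == [:: v]).
Proof.
case: t2 => [|y [|z w]]; rewrite ?andbF //=.
- congr (_ && _); case/lastP: t1 => [|t c] //.
  by rewrite size_rcons addn1 subn2 /= -cats1 drop_size_cat //; case: t.
- rewrite eqseq_cons /= andbF [_ == [:: v]]negbTE ?andbF //.
  by apply/eqP => /(congr1 size); rewrite size_drop /=; lia.
Qed.

End LastTwo.

Section Crossing.
Variable V : finType.
Implicit Types (A e : {set V}) (s t : seq V).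

Definition crossing A (B e : {set V}) : bool :=
  [&& e :&: A != set0, e :&: B != set0 & e \subset A :|: B].

Lemma dprimeE (R : realDomainType) (H : hypergraph R V) A B :
  dprime H A B = \sum_(x <- H | crossing A B x.1) x.2.
Proof. by []. Qed.

Lemma dprime_map_edges (R : realDomainType) (H : hypergraph R V)
    (f : {set V} -> {set V}) A B :
  (forall e, crossing A B (f e) = crossing A B e) ->
  dprime [seq (f x.1, x.2) | x <- H] A B = dprime H A B.
Proof. by move=> fE; rewrite !dprimeE big_map; apply: eq_bigl => x /=. Qed.

Lemma crossing_cat A (v : V) t1 t2 :
  v \notin A -> {subset t1 <= A} -> {in t2, forall x, x \notin A} -> uniq t2 ->
  crossing A [set v] [set x in t1 ++ t2] = (t1 != [::]) && (t2 == [:: v]).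
Proof.
move=> vA t1A t2A ut2.
have meetA : ([set x in t1 ++ t2] :&: A != set0) = (t1 != [::]).
  case: t1 t1A => [|a t1] t1A /=.
  - apply/negbTE/negPn/eqP/setP => x; rewrite !inE.
    by apply/andP => -[/t2A/negP].
  - by apply/set0Pn; exists a; rewrite !inE eqxx t1A // mem_head.
have meetv : ([set x in t1 ++ t2] :&: [set v] != set0) = (v \in t2).
  apply/set0Pn/idP => [[x]|vt2]; last first.
    by exists v; rewrite !inE mem_cat vt2 orbT eqxx.
  rewrite !inE mem_cat => /andP[/orP[/t1A xA|xt2] /eqP xv]; subst x => //.
  by rewrite xA in vA.
have sub : ([set x in t1 ++ t2] \subset A :|: [set v]) = all (pred1 v) t2.
  apply/subsetP/allP => [h x xt2|h x].
  - have := h x; rewrite !inE mem_cat xt2 orbT (negbTE (t2A x xt2)) /=.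
    by rewrite eq_sym; apply.
  - rewrite !inE mem_cat => /orP[/t1A -> //|/h /=].
    by rewrite eq_sym => ->; rewrite orbT.
rewrite /crossing meetA meetv sub; congr (_ && _).
case: t2 ut2 {meetA t2A meetv sub} => [|y [|z w]] //=.
- by move=> _; rewrite inE eqseq_cons eqxx !andbT [v == y]eq_sym andbb.
- rewrite inE negb_or => /and3P[/andP[ne_yz _] _ _].
  rewrite eqseq_cons /= andbF; apply/negbTE.
  by apply: contra ne_yz => /and4P[_ /eqP-> /eqP-> _].
Qed.

Lemma notin_vprefix s i (x : V) :
  uniq s -> x \in drop i s -> x \notin vprefix s i.
Proof.
rewrite -{1}(cat_take_drop i s) cat_uniq inE => /and3P[_ /hasPn drop_take _].
exact: drop_take.
Qed.

Lemma crossing_tight_edge s i (v : V) e :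
  uniq s -> (forall x, x \in s) -> v \in drop i s ->
  crossing (vprefix s i) [set v] (tight_edge s e) =
  crossing (vprefix s i) [set v] e.
Proof.
move=> us alls vQ.
set t1 := [seq x <- take i s | x \in e]; set t2 := [seq x <- drop i s | x \in e].
have trace : [seq x <- s | x \in e] = t1 ++ t2 by rewrite -filter_cat cat_take_drop.
have t1A : {subset t1 <= vprefix s i}.
  by move=> x; rewrite mem_filter inE => /andP[].
have t2A : {in t2, forall x, x \notin vprefix s i}.
  by move=> x; rewrite mem_filter => /andP[_ /(notin_vprefix us)].
have ut2 : uniq t2 by apply/filter_uniq/drop_uniq.
have eE : e = [set x in t1 ++ t2].
  by apply/setP => x; rewrite inE -trace mem_filter alls andbT.
have vA := notin_vprefix us vQ.
clearbody t1 t2.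
have t1'A : {subset drop (size t1 + size t2 - 2) t1 <= vprefix s i}.
  by move=> x /mem_drop/t1A.
have t2'A : {in drop (size t2 - 2) t2, forall x, x \notin vprefix s i}.
  by move=> x /mem_drop/t2A.
rewrite /tight_edge /= trace drop_last_two_cat eE.
rewrite (crossing_cat vA t1'A t2'A (drop_uniq _ ut2)) (crossing_cat vA t1A t2A ut2).
exact: drop_last_two_cat_single.
Qed.

Lemma vtx_in_drop s i (j : 'I_(size s)) : (i <= j)%N -> vtx s j \in drop i s.
Proof.
move=> le_ij; rewrite /vtx (tnth_nth (tnth (in_tuple s) j)) /=.
rewrite -(subnKC le_ij) -nth_drop; apply: mem_nth.
by rewrite size_drop ltn_sub2r // (leq_ltn_trans le_ij (ltn_ord j)).
Qed.

End Crossing.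

(* j is 0-based: vtx s j = v_(j+1); the condition i < j+1 is (i <= j)%N. *)
Theorem mainTheorem17 (R : realDomainType) (V : finType)
    (H : hypergraph R V) (s : seq V) :
  (forall e, e \in H -> 0 <= e.2) ->
  is_ordering s ->
  tight_ordering H s ->
  forall (i : nat) (j : 'I_(size s)), (1 <= i)%N -> (i <= j)%N ->
    dprime (tight_graph s H) (vprefix s i) [set vtx s j] =
    dprime H (vprefix s i) [set vtx s j].
Proof.
move=> _ [us alls] _ i j _ le_ij.
apply: dprime_map_edges => e.
exact: crossing_tight_edge us alls (vtx_in_drop le_ij).
Qed.
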